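(* Let $P$ be a finite poset and $p\in(0,1]$. For any order ideal $J'\in J(P)$ and any $t\ge 0$, \[ \mathbb{P}\big(T_{J(P)}(J')\ge t\big)\le \mathbb{P}\big(T(J(P))\ge t\big). \]
   Context: An order ideal of $P$ is a subset $I\subseteq P$ such that $x\in I$ and $y\le x$ imply $y\in I$. $J(P)$ is the lattice of order ideals of $P$ ordered by inclusion. The Ungarian Markov chain on $J(P)$ with parameter $p$ moves from an order ideal $I$ by deleting from $I$ a random subset of its maximal elements, each maximal element being deleted independently with probability $p$ (equivalently: for a finite lattice $L$, from $x$ choose each element covered by $x$ independently with probability $p$ and move to the meet of $x$ and the chosen elements). $T_{J(P)}(J')$ is the number of steps for this chain started at $J'$ to reach $\varnothing$, and $T(J(P))=T_{J(P)}(P)$. *)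

From HB Require Import structures.
From mathcomp Require Import all_boot all_order all_algebra.
Set Implicit Arguments. Unset Strict Implicit. Unset Printing Implicit Defensive.
Import Order.TTheory GRing.Theory Num.Theory.
Local Open Scope ring_scope.

Section Ungarian.
Variables (d : Order.disp_t) (P : finPOrderType d) (R : realFieldType) (p : R).

Definition order_ideal (I : {set P}) : bool :=
  [forall x, forall y, ((x \in I) && (y <= x)%O) ==> (y \in I)].

Definition maxels (I : {set P}) : {set P} :=
  [set x in I | [forall y in I, ~~ (x < y)%O]].

(* one-step transition probability of the Ungarian Markov chain on J(P):
   from I, each maximal element of I is deleted independently with prob. p;
   the chain moves to K = I minus the deleted set D (D a subset of maxels I). *)
Definition ung_trans (I K : {set P}) : R :=
  if (K \subset I) && ((I :\: K) \subset maxels I) then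
    p ^+ #|I :\: K| * (1 - p) ^+ (#|maxels I| - #|I :\: K|)%N
  else 0.

(* ung_surv n I = probability that the chain started at I has X_0, ..., X_{n-1}
   all different from the empty set, i.e. P(T_{J(P)}(I) >= n), where
   T_{J(P)}(I) = min { k : X_k = empty set }. *)
Fixpoint ung_surv (n : nat) (I : {set P}) : R :=
  match n with
  | 0 => 1
  | n'.+1 => if I == set0 then 0
             else \sum_(K : {set P}) ung_trans I K * ung_surv n' K
  end.

End Ungarian.

From HB Require Import structures.
From mathcomp Require Import all_boot all_order all_algebra.
Import Order.TTheory GRing.Theory Num.Theory.
Local Open Scope ring_scope.

(* A step of the chain from I can be realised as I :\: (C :&: maxels I) for
   one random subset C of P, containing each element independently with
   probability p, whatever I is.  If I \subset I', an element of I that is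
   maximal in I' is maximal in I, so under this coupling the inclusion
   persists step by step and the chain from I' is nonempty as long as the one
   from I is.  Hence P(T(I) >= t) is monotone in I, and J' \subset P. *)

Section BernoulliSubset.
Context {T : finType} {R : comPzRingType} (p : R).

Definition bernoulli_weight (C : {set T}) : R :=
  \prod_x (if x \in C then p else 1 - p).

Lemma sum_bernoulli_weight_setI (M D : {set T}) : D \subset M ->
  \sum_(C : {set T} | C :&: M == D) bernoulli_weight C
    = p ^+ #|D| * (1 - p) ^+ #|M :\: D|.
Proof.
move=> DM.
(* The constraint [C :&: M == D] splits into one indicator per element, after
   which the sum over C factorises by [bigA_distr]. *)
pose a x := ((x \in M) ==> (x \in D))%:R : R.
pose b x := ((x \in M) ==> (x \notin D))%:R : R.
have factorwise C : (if C :&: M == D then bernoulli_weight C else 0)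
    = \prod_x (if x \in C then p * a x else (1 - p) * b x).
  case: eqP => [CMD | CMD].
    apply: eq_bigr => x _; rewrite /a /b -CMD !inE.
    by case: (x \in C); case: (x \in M); rewrite /= mulr1.
  have [x xCMD] : exists x, (x \in C :&: M) != (x \in D).
    apply/existsP; apply: contra_notT CMD => /existsPn eqCMD.
    by apply/setP => x; apply/eqP; rewrite -[_ == _]negbK eqCMD.
  rewrite (bigD1 x) //= /a /b; move: xCMD; rewrite !inE.
  have /implyP := subsetP DM x.
  case: (x \in C); case: (x \in M); case: (x \in D);
  by rewrite // !(mulr0, mul0r).
rewrite big_mkcond (eq_bigr _ (fun C _ => factorwise C)) /= -bigA_distr.
have -> : \prod_x (p * a x + (1 - p) * b x)
    = \prod_(x in M) (if x \in D then p else 1 - p).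
  rewrite [RHS]big_mkcond; apply: eq_bigr => x _; rewrite /a /b.
  case: (x \in M); case: (x \in D);
  by rewrite /= ?mulr1 ?mulr0 ?addr0 ?add0r // addrC subrK.
rewrite (bigID (mem D)) /= -!prodr_const; congr (_ * _).
  apply: eq_big => [x | x /andP[_ ->]] //.
  by rewrite andb_idl // => /(subsetP DM).
apply: eq_big => [x | x /andP[_ /negbTE ->]] //.
by rewrite !inE andbC.
Qed.

End BernoulliSubset.

Lemma setD_eq_sym {T : finType} (A X K : {set T}) :
  X \subset A -> K \subset A -> (A :\: X == K) = (X == A :\: K).
Proof.
move=> XA KA; apply/eqP/eqP => [<- | ->]; rewrite setDDr setDv set0U.
  by rewrite (setIidPr XA).
exact/setIidPr.
Qed.

Section UngarianMonotone.
Context {d : Order.disp_t} {P : finPOrderType d} {R : realFieldType} (p : R).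

Lemma maxels_sub (I : {set P}) : maxels I \subset I.
Proof. by apply/subsetP => x; rewrite inE => /andP[]. Qed.

Lemma setI_maxelsS {I I' : {set P}} :
  I \subset I' -> I :&: maxels I' \subset maxels I.
Proof.
move=> II'; apply/subsetP => x.
rewrite !inE => /andP[xI /andP[_ /forallP xmax]].
rewrite xI; apply/forallP => y; apply/implyP => yI.
exact: implyP (xmax y) (subsetP II' y yI).
Qed.

Lemma setD_maxelsS (C : {set P}) {I I' : {set P}} : I \subset I' ->
  I :\: (C :&: maxels I) \subset I' :\: (C :&: maxels I').
Proof.
move=> II'; apply/subsetP => y; rewrite !in_setD !in_setI => /andP[yCmax yI].
rewrite (subsetP II' y yI) andbT; apply: contra yCmax => /andP[-> ymax'].
by apply: (subsetP (setI_maxelsS II')); rewrite in_setI yI.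
Qed.

Lemma ung_trans_bernoulli (I K : {set P}) :
  ung_trans p I K
    = \sum_(C : {set P} | I :\: (C :&: maxels I) == K) bernoulli_weight p C.
Proof.
rewrite /ung_trans; case: ifP => [/andP[KI IKM] | notstep].
  rewrite (eq_bigl (fun C => C :&: maxels I == I :\: K)) => [|C]; last first.
    by rewrite setD_eq_sym // (subset_trans (subsetIr _ _) (maxels_sub I)).
  by rewrite sum_bernoulli_weight_setI // (cardsDS IKM).
symmetry; apply: big_pred0 => C; apply: contraFF notstep => /eqP <-.
by rewrite subsetDl setDDr setDv set0U subIset // subsetIr orbT.
Qed.

Lemma sum_ung_trans (I : {set P}) (f : {set P} -> R) :
  \sum_K ung_trans p I K * f K
    = \sum_(C : {set P}) bernoulli_weight p C * f (I :\: (C :&: maxels I)).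
Proof.
rewrite [RHS](partition_big (fun C => I :\: (C :&: maxels I)) predT) //=.
apply: eq_bigr => K _; rewrite ung_trans_bernoulli big_distrl /=.
by apply: eq_bigr => C /eqP ->.
Qed.

Hypotheses (p_ge0 : 0 <= p) (p_le1 : p <= 1).

Lemma bernoulli_weight_ge0 (C : {set P}) : 0 <= bernoulli_weight p C.
Proof. by apply: prodr_ge0 => x _; case: ifP; rewrite ?subr_ge0. Qed.

Lemma ung_surv_ge0 n (I : {set P}) : 0 <= ung_surv p n I.
Proof.
elim: n I => [|n IHn] I /=; first exact: ler01.
case: ifP => // _; rewrite sum_ung_trans; apply: sumr_ge0 => C _.
exact: mulr_ge0 (bernoulli_weight_ge0 C) (IHn _).
Qed.

Lemma ung_survS n {I I' : {set P}} :
  I \subset I' -> ung_surv p n I <= ung_surv p n I'.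
Proof.
elim: n I I' => [|n IHn] I I' II' /=; first exact: lexx.
case: ifP => [_ | /set0Pn[x xI]]; first exact: (ung_surv_ge0 n.+1).
have /negbTE -> : I' != set0 by apply/set0Pn; exists x; apply: (subsetP II').
rewrite !sum_ung_trans; apply: ler_sum => C _.
apply: ler_wpM2l; first exact: bernoulli_weight_ge0.
exact/IHn/setD_maxelsS.
Qed.

End UngarianMonotone.

Theorem corollary2p4 (d : Order.disp_t) (P : finPOrderType d) (R : realFieldType)
  (p : R) (hp0 : 0 < p) (hp1 : p <= 1) (J' : {set P}) (hJ' : order_ideal J')
  (t : nat) :
  ung_surv p t J' <= ung_surv p t [set: P].
Proof.
exact: (ung_survS p (ltW hp0) hp1 t (subsetT J')).
Qed.
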